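(* There exists a Sudoku board $B$ such that the only element $g\in G_9$ with $g\cdot B=B$ is the identity. Consequently the largest orbit of $G_9$ on Sudoku boards has size $|G_9|=1{,}218{,}998{,}108{,}160$.
   Context: A Sudoku board is a $9\times 9$ array with entries from a fixed set of nine symbols such that every row, every column and every one of the nine $3\times 3$ blocks contains each symbol exactly once. The full Sudoku symmetry group is $G_9=H_9\times S_9$, where $H_9$ (order $3{,}359{,}232$) is the group of cell rearrangements generated by permutations of the three bands (horizontal strips of blocks), permutations of the rows within a band, permutations of the three pillars (vertical strips of blocks), permutations of the columns within a pillar, and the transpose, and $S_9$ is the group of all $9!$ relabelings (permutations of the symbols applied to every entry). *)

From mathcomp Require Import all_boot all_fingroup.
Set Implicit Arguments. Unset Strict Implicit. Unset Printing Implicit Defensive.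

(* A row index is (band, row within band); a column index is (pillar, column
   within pillar).  Row (b,i) is row 3b+i of the grid. *)
Definition idx := ('I_3 * 'I_3)%type.
Definition cell := (idx * idx)%type.   (* (row, column) *)
Definition board := {ffun cell -> 'I_9}.

Definition is_sudoku (B : board) : bool :=
  [&& [forall r : idx, forall k : 'I_9, #|[set c : idx | B (r, c) == k]| == 1],
      [forall c : idx, forall k : 'I_9, #|[set r : idx | B (r, c) == k]| == 1] &
      [forall bp : 'I_3 * 'I_3, forall k : 'I_9,
         #|[set x : cell | [&& (x.1.1 == bp.1), (x.2.1 == bp.2) & (B x == k)]]| == 1]].

Definition band_map (s : {perm 'I_3}) (x : cell) : cell :=
  ((s x.1.1, x.1.2), x.2).
Definition row_map (b : 'I_3) (s : {perm 'I_3}) (x : cell) : cell :=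
  if x.1.1 == b then ((x.1.1, s x.1.2), x.2) else x.
Definition pillar_map (s : {perm 'I_3}) (x : cell) : cell :=
  (x.1, (s x.2.1, x.2.2)).
Definition col_map (p : 'I_3) (s : {perm 'I_3}) (x : cell) : cell :=
  if x.2.1 == p then (x.1, (x.2.1, s x.2.2)) else x.
Definition transpose_map (x : cell) : cell := (x.2, x.1).

Definition H9_gens : {set {perm cell}} :=
  [set g : {perm cell} |
     [|| [exists s : {perm 'I_3}, [forall x, g x == band_map s x]],
         [exists b : 'I_3, exists s : {perm 'I_3}, [forall x, g x == row_map b s x]],
         [exists s : {perm 'I_3}, [forall x, g x == pillar_map s x]],
         [exists p : 'I_3, exists s : {perm 'I_3}, [forall x, g x == col_map p s x]]
       | [forall x, g x == transpose_map x]]].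

Definition H9 : {group {perm cell}} := <<H9_gens>>%G.

(* G_9 = H_9 x S_9, as a set of pairs (cell rearrangement, relabeling). *)
Definition G9 : {set {perm cell} * {perm 'I_9}} :=
  setX H9 [set: {perm 'I_9}].

(* Action: (h, s) . B  moves the entry at cell x to cell h x and relabels it by s. *)
Definition act9 (g : {perm cell} * {perm 'I_9}) (B : board) : board :=
  [ffun x => g.2 (B ((g.1^-1)%g x))].

Definition orbit9 (B : board) : {set board} := [set act9 g B | g in G9].

(* |G_9| = |H_9| * 9! = (2 * (3!)^8) * 9! = 3359232 * 362880 = 1218998108160,
   written as an expression to avoid a huge unary nat literal. *)
Definition G9_order : nat := 2 * (3`!) ^ 8 * 9`!.

From mathcomp Require Import all_boot all_fingroup.
From mathcomp Require Import zify.
Set Implicit Arguments. Unset Strict Implicit. Unset Printing Implicit Defensive.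

(* Every element of H_9 has a unique normal form: permute the rows by a line
   permutation (a permutation of the bands together with a permutation of the
   rows inside each band), the columns by another one, and possibly transpose.
   Normal forms are stable under right multiplication by the generators, so they
   exhaust H_9, and |H_9| = 2 (3!)^8.
   For the board W below, whose first row is 0..8, a symmetry (h, s) fixing W
   gives s (W r c) = W' (R r) (C c), where W' is W or its transpose.  Row 0 shows
   that s is determined by C and R 0, and then so is R; a machine check over the
   6^4 line permutations C and the 9 values of R 0 shows that only the identity
   survives.  The orbit-stabiliser theorem then gives the orbit size. *)

Definition lineperm := ({perm 'I_3} * {ffun 'I_3 -> {perm 'I_3}})%type.

Definition lineperm_fun (l : lineperm) (y : idx) : idx := (l.1 y.1, l.2 y.1 y.2).

Lemma lineperm_fun_inj l : injective (lineperm_fun l).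
Proof. by move=> [b i] [b' i'] [/perm_inj Eb]; subst b' => /perm_inj ->. Qed.

Lemma lineperm_fun_eq l1 l2 : lineperm_fun l1 =1 lineperm_fun l2 -> l1 = l2.
Proof.
case: l1 l2 => [s1 f1] [s2 f2] E.
have Es : s1 = s2 by apply/permP => b; exact: (congr1 fst (E (b, ord0))).
have Ef : f1 = f2 by apply/ffunP => b; apply/permP => i; exact: (congr1 snd (E (b, i))).
by rewrite Es Ef.
Qed.

Definition idx_band (s : {perm 'I_3}) (y : idx) : idx := (s y.1, y.2).
Definition idx_row (b : 'I_3) (s : {perm 'I_3}) (y : idx) : idx :=
  if y.1 == b then (y.1, s y.2) else y.

Definition postband (s : {perm 'I_3}) (l : lineperm) : lineperm := ((l.1 * s)%g, l.2).
Definition postrow (b : 'I_3) (s : {perm 'I_3}) (l : lineperm) : lineperm :=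
  (l.1, [ffun y => if l.1 y == b then (l.2 y * s)%g else l.2 y]).

Lemma lineperm_fun_postband s l y :
  idx_band s (lineperm_fun l y) = lineperm_fun (postband s l) y.
Proof. by rewrite /idx_band /lineperm_fun /= permM. Qed.

Lemma lineperm_fun_postrow b s l y :
  idx_row b s (lineperm_fun l y) = lineperm_fun (postrow b s l) y.
Proof. by rewrite /idx_row /lineperm_fun /= ffunE; case: eqP; rewrite ?permM. Qed.

Lemma row_mapE b s x : row_map b s x = (idx_row b s x.1, x.2).
Proof. by rewrite /row_map /idx_row; case: ifP => // _; case: x => -[]. Qed.

Lemma col_mapE p s x : col_map p s x = (x.1, idx_row p s x.2).
Proof. by rewrite /col_map /idx_row; case: ifP => // _; case: x => ? []. Qed.

Definition nform := (bool * lineperm * lineperm)%type.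

Definition nform_fun (q : nform) (x : cell) : cell :=
  if q.1.1 then (lineperm_fun q.2 x.2, lineperm_fun q.1.2 x.1)
  else (lineperm_fun q.1.2 x.1, lineperm_fun q.2 x.2).

Lemma nform_fun_inj q : injective (nform_fun q).
Proof.
move=> [x1 x2] [y1 y2] E; move: (congr1 fst E) (congr1 snd E); rewrite /nform_fun.
by case: q.1.1 => /= /lineperm_fun_inj -> /lineperm_fun_inj ->.
Qed.

Definition nform_perm q := perm (@nform_fun_inj q).
Definition nform_set := nform_perm @: [set: nform].

Lemma band_mapK s : cancel (band_map s) (band_map s^-1).
Proof. by move=> [[b i] c]; rewrite /band_map /= permK. Qed.
Lemma pillar_mapK s : cancel (pillar_map s) (pillar_map s^-1).
Proof. by move=> [r [p j]]; rewrite /pillar_map /= permK. Qed.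
Lemma row_mapK b s : cancel (row_map b s) (row_map b s^-1).
Proof.
move=> [[b' i] c]; rewrite /row_map /=.
by case: (eqVneq b' b) => [->|/negbTE nb]; rewrite /= ?eqxx ?permK ?nb.
Qed.
Lemma col_mapK p s : cancel (col_map p s) (col_map p s^-1).
Proof.
move=> [r [p' j]]; rewrite /col_map /=.
by case: (eqVneq p' p) => [->|/negbTE np]; rewrite /= ?eqxx ?permK ?np.
Qed.
Lemma transpose_mapK : involutive transpose_map.
Proof. by case. Qed.

Definition band_perm s := perm (can_inj (band_mapK s)).
Definition pillar_perm s := perm (can_inj (pillar_mapK s)).
Definition row_perm b s := perm (can_inj (row_mapK b s)).
Definition col_perm p s := perm (can_inj (col_mapK p s)).
Definition transpose_perm := perm (inv_inj transpose_mapK).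

Lemma band_perm_in s : band_perm s \in H9.
Proof.
apply: mem_gen; rewrite inE; apply/orP; left.
by apply/existsP; exists s; apply/forallP => x; rewrite permE.
Qed.
Lemma row_perm_in b s : row_perm b s \in H9.
Proof.
apply: mem_gen; rewrite inE; apply/or4P; apply: Or42.
by apply/existsP; exists b; apply/existsP; exists s; apply/forallP => x; rewrite permE.
Qed.
Lemma pillar_perm_in s : pillar_perm s \in H9.
Proof.
apply: mem_gen; rewrite inE; apply/or4P; apply: Or43.
by apply/existsP; exists s; apply/forallP => x; rewrite permE.
Qed.
Lemma col_perm_in p s : col_perm p s \in H9.
Proof.
apply: mem_gen; rewrite inE; apply/or4P; apply: Or44; apply/orP; left.
by apply/existsP; exists p; apply/existsP; exists s; apply/forallP => x; rewrite permE.
Qed.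
Lemma transpose_perm_in : transpose_perm \in H9.
Proof.
apply: mem_gen; rewrite inE; apply/or4P; apply: Or44; apply/orP; right.
by apply/forallP => x; rewrite permE.
Qed.

Definition ord_mid : 'I_3 := Ordinal (isT : 1 < 3).

Lemma ord3P (b : 'I_3) : [\/ b = ord0, b = ord_mid | b = ord_max].
Proof.
by case: b => -[|[|[|//]]] Hb; [apply: Or31 | apply: Or32 | apply: Or33]; apply: val_inj.
Qed.

Definition rows_perm (l : lineperm) : {perm cell} :=
  (row_perm ord0 (l.2 ord0) * row_perm ord_mid (l.2 ord_mid)
   * row_perm ord_max (l.2 ord_max) * band_perm l.1)%g.
Definition cols_perm (l : lineperm) : {perm cell} :=
  (col_perm ord0 (l.2 ord0) * col_perm ord_mid (l.2 ord_mid)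
   * col_perm ord_max (l.2 ord_max) * pillar_perm l.1)%g.

Lemma rows_permE l x : rows_perm l x = (lineperm_fun l x.1, x.2).
Proof.
rewrite !permM !permE; case: x => -[b i] c.
by case: (ord3P b) => ->; rewrite /row_map /band_map /=.
Qed.

Lemma cols_permE l x : cols_perm l x = (x.1, lineperm_fun l x.2).
Proof.
rewrite !permM !permE; case: x => r [p j].
by case: (ord3P p) => ->; rewrite /col_map /pillar_map /=.
Qed.

Lemma nform_perm_in q : nform_perm q \in H9.
Proof.
have -> : nform_perm q = (rows_perm q.1.2 * cols_perm q.2 * if q.1.1 then transpose_perm else 1)%g.
  apply/permP => x; rewrite [LHS]permE 2!permM rows_permE cols_permE /nform_fun.
  by case: q.1.1; rewrite ?permE ?perm1.
apply: groupM; last by case: q.1.1; rewrite ?transpose_perm_in ?group1.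
apply: groupM; first by rewrite !groupM ?row_perm_in ?band_perm_in.
by rewrite !groupM ?col_perm_in ?pillar_perm_in.
Qed.

Lemma nform_perm_mulr q (a : {perm cell}) q' :
  (forall x, a (nform_fun q x) = nform_fun q' x) -> (nform_perm q * a)%g \in nform_set.
Proof.
move=> E; have -> : (nform_perm q * a)%g = nform_perm q' by apply/permP => x; rewrite permM !permE.
by rewrite imset_f ?inE.
Qed.

Lemma H9_gens_norm : H9_gens \subset 'N(nform_set | 'R)%g.
Proof.
apply/subsetP => a; rewrite !inE => gen_a; apply/subsetP => _ /imsetP[[[t R] C] _ ->].
rewrite inE /=; case/or4P: gen_a => [/existsP[s /forallP Ea] | /existsP[b /existsP[s /forallP Ea]]
  | /existsP[s /forallP Ea] | /orP[/existsP[b /existsP[s /forallP Ea]] | /forallP Ea]];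
  [ apply: (@nform_perm_mulr _ _ (if t then (t, R, postband s C) else (t, postband s R, C)))
  | apply: (@nform_perm_mulr _ _ (if t then (t, R, postrow b s C) else (t, postrow b s R, C)))
  | apply: (@nform_perm_mulr _ _ (if t then (t, postband s R, C) else (t, R, postband s C)))
  | apply: (@nform_perm_mulr _ _ (if t then (t, postrow b s R, C) else (t, R, postrow b s C)))
  | apply: (@nform_perm_mulr _ _ (~~ t, R, C)) ] => x; rewrite (eqP (Ea _)) /nform_fun;
  case: t => /=; rewrite ?row_mapE ?col_mapE -?lineperm_fun_postband -?lineperm_fun_postrow //.
Qed.

Definition nform1 : nform := (false, (1, [ffun=> 1]), (1, [ffun=> 1]))%g.

Lemma nform_perm1 : nform_perm nform1 = 1%g.
Proof. by apply/permP => -[[b i] [p j]]; rewrite !permE /nform_fun /lineperm_fun /= !ffunE !perm1. Qed.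

Lemma H9_nform : H9 :=: nform_set.
Proof.
apply/eqP; rewrite eqEsubset; apply/andP; split; last first.
  by apply/subsetP => _ /imsetP[q _ ->]; exact: nform_perm_in.
have H9_norm : H9 \subset 'N(nform_set | 'R)%g by rewrite gen_subG H9_gens_norm.
apply/subsetP => h H9h; have := astabs_act 1%g (subsetP H9_norm h H9h).
by rewrite /= mul1g => ->; rewrite -nform_perm1 imset_f ?inE.
Qed.

Lemma nform_fun_transposed q :
  q.1.1 = ((nform_fun q ((ord0, ord0), (ord0, ord0))).1
           != (nform_fun q ((ord0, ord0), (ord_max, ord0))).1).
Proof. by rewrite /nform_fun; case: q.1.1; rewrite /= ?eqxx ?(inj_eq (@lineperm_fun_inj _)). Qed.

Lemma nform_perm_inj : injective nform_perm.
Proof.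
move=> q1 q2 /permP E12.
have {}E12 x : nform_fun q1 x = nform_fun q2 x by have := E12 x; rewrite !permE.
have Et : q1.1.1 = q2.1.1 by rewrite !nform_fun_transposed !E12.
case: q1 q2 Et E12 => -[t R1] C1 [[t' R2] C2] /= <- E12.
have ER : R1 = R2.
  apply: lineperm_fun_eq => y; have := E12 (y, (ord0, ord0)); rewrite /nform_fun.
  by case: t {E12} => [/(congr1 snd) | /(congr1 fst)].
have EC : C1 = C2.
  apply: lineperm_fun_eq => y; have := E12 ((ord0, ord0), y); rewrite /nform_fun.
  by case: t {E12} => [/(congr1 fst) | /(congr1 snd)].
by rewrite ER EC.
Qed.

Lemma card_perm_type (T : finType) : #|{: {perm T}}| = #|T|`!.
Proof.
rewrite -cardsT -card_perm; apply: eq_card => s.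
by rewrite !inE; apply/esym/subsetP => x _; rewrite inE.
Qed.

Lemma card_H9 : #|H9| = 2 * 3`! ^ 8.
Proof.
rewrite H9_nform card_imset; last exact: nform_perm_inj.
rewrite cardsT !card_prod card_bool card_ffun !card_perm_type !card_ord.
by rewrite -expnS -mulnA -expnD.
Qed.

Lemma card_G9 : #|G9| = G9_order.
Proof. by rewrite /G9 cardsX card_H9 cardsT card_perm_type card_ord. Qed.

Lemma card_fibre_inj (U : finType) n (f : U -> 'I_n) (k : 'I_n) :
  #|U| = n -> injective f -> #|[set x | f x == k]| = 1.
Proof.
move=> cardU f_inj; have [g fK gK] : bijective f by apply: inj_card_bij; rewrite // cardU card_ord.
rewrite (_ : [set x | f x == k] = [set g k]) ?cards1 //.
by apply/setP => x; rewrite !inE -(can_eq fK) gK.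
Qed.

Definition grid := seq (seq nat).
Definition entry (T : grid) (r c : nat) : nat := nth 0 (nth [::] T r) c.

Definition I3 := iota 0 3.
Definition I9 := iota 0 9.

Lemma allI9 (P : pred nat) : all P I9 -> forall i, i < 9 -> P i.
Proof. by move=> /allP P9 i i9; apply: P9; rewrite mem_iota. Qed.

Lemma allI3 (P : pred nat) : all P I3 -> forall i, i < 3 -> P i.
Proof. by move=> /allP P3 i i3; apply: P3; rewrite mem_iota. Qed.

Definition distinct9 (f : nat -> nat) : bool := uniq [seq f k | k <- I9].

Lemma distinct9_inj f i j : distinct9 f -> i < 9 -> j < 9 -> f i = f j -> i = j.
Proof.
move=> f_uniq i9 j9 Efij; apply/eqP; rewrite -(nth_uniq 0 _ _ f_uniq) ?size_map ?size_iota //.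
by rewrite !(nth_map 0) ?size_iota // !nth_iota // Efij.
Qed.

(* Cell ((b, i), (p, j)) of a board sits in row 3b+i and column 3p+j of a grid. *)
Definition enc (y : idx) : nat := 3 * y.1 + y.2.
Definition dec (k : nat) : idx := (inord (k %/ 3), inord (k %% 3)).

Lemma enc_lt y : enc y < 9.
Proof. by case: y => -[b ?] [i ?]; rewrite /enc /=; lia. Qed.

Lemma encK : cancel enc dec.
Proof.
by case=> -[b ?] [i ?]; rewrite /dec /enc /=; congr pair; apply: val_inj; rewrite /= inordK; lia.
Qed.

Lemma decK k : k < 9 -> enc (dec k) = k.
Proof. by move=> k9; rewrite /enc /dec /= !inordK; lia. Qed.

Lemma enc_div3 y : enc y %/ 3 = y.1.
Proof. by case: y => -[b ?] [i ?]; rewrite /enc /=; lia. Qed.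

Lemma enc_mod3 y : enc y %% 3 = y.2.
Proof. by case: y => -[b ?] [i ?]; rewrite /enc /=; lia. Qed.

Lemma enc_inj : injective enc.
Proof. exact: can_inj encK. Qed.

Definition sudoku_grid (T : grid) : bool :=
  [&& all (fun r => all (fun c => entry T r c < 9) I9) I9,
      all (fun r => distinct9 (entry T r)) I9,
      all (fun c => distinct9 (entry T ^~ c)) I9 &
      all (fun b => all (fun p =>
        distinct9 (fun k => entry T (3 * b + k %/ 3) (3 * p + k %% 3))) I3) I3].

Definition board_of_grid (T : grid) : board :=
  [ffun x => inord (entry T (enc x.1) (enc x.2))].

Section SudokuGrid.

Variable T : grid.
Hypothesis sudokuT : sudoku_grid T.

Lemma sudoku_grid_lt r c : r < 9 -> c < 9 -> entry T r c < 9.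
Proof. by case/and4P: sudokuT => lt9 _ _ _ r9 c9; exact: allI9 (allI9 lt9 r9) _ c9. Qed.

Lemma board_of_gridE x : val (board_of_grid T x) = entry T (enc x.1) (enc x.2).
Proof. by rewrite ffunE /= inordK // sudoku_grid_lt ?enc_lt. Qed.

Lemma sudoku_board_of_grid : is_sudoku (board_of_grid T).
Proof.
case/and4P: sudokuT => _ rowsT colsT blocksT.
have cardI : #|{: idx}| = 9 by rewrite card_prod card_ord.
apply/and3P; split; apply/forallP => a; apply/forallP => k; apply/eqP.
- apply: card_fibre_inj => // c1 c2 /(congr1 val); rewrite !board_of_gridE /= => E.
  by apply: enc_inj; apply: distinct9_inj (allI9 rowsT (enc_lt a)) (enc_lt _) (enc_lt _) E.
- apply: card_fibre_inj => // r1 r2 /(congr1 val); rewrite !board_of_gridE /= => E.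
  by apply: enc_inj; apply: distinct9_inj (allI9 colsT (enc_lt a)) (enc_lt _) (enc_lt _) E.
case: a => b p; pose blk (y : idx) : cell := ((b, y.1), (p, y.2)).
have blk_inj : injective blk by move=> [? ?] [? ?] [-> ->].
have -> : [set x | [&& x.1.1 == b, x.2.1 == p & board_of_grid T x == k]]
          = blk @: [set y | board_of_grid T (blk y) == k].
  apply/setP => -[[b' i] [p' j]]; rewrite inE /=; apply/and3P/imsetP.
    by case=> /eqP -> /eqP -> Bk; exists (i, j); rewrite ?inE.
  by case=> -[i' j'] Bk [-> -> -> ->]; rewrite !eqxx; rewrite inE in Bk.
rewrite card_imset //; apply: card_fibre_inj => // y1 y2 /(congr1 val).
rewrite !board_of_gridE => E; apply: enc_inj.
apply: (distinct9_inj (allI3 (allI3 blocksT (ltn_ord b)) (ltn_ord p))); rewrite ?enc_lt //.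
by rewrite /= !enc_div3 !enc_mod3.
Qed.

End SudokuGrid.

Definition transpose_grid (T : grid) : grid := [seq [seq entry T r c | r <- I9] | c <- I9].

Lemma entry_transpose T r c : r < 9 -> c < 9 -> entry (transpose_grid T) r c = entry T c r.
Proof. by move=> r9 c9; rewrite /entry !(nth_map 0) ?size_iota // !nth_iota. Qed.

Section InducedMaps.

Variables T T' : grid.

Definition find_row (c v : nat) : nat := find (fun r => entry T' r c == v) I9.

(* A relabelling [sg] with [sg (T r c) = T' (rn r) (cf c)] is forced by [cf] and
   [rn 0] because row 0 of [T] is the identity; [rn] is then forced as well. *)
Definition induced_rows (cf : nat -> nat) (r0 r : nat) : nat :=
  find_row (cf 0) (entry T' r0 (cf (entry T r 0))).

Definition compatible (cf : nat -> nat) (r0 : nat) : bool :=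
  all (fun r => all (fun c =>
    entry T' (induced_rows cf r0 r) (cf c) == entry T' r0 (cf (entry T r c))) I9) I9.

Hypothesis T_lt : forall r c, r < 9 -> c < 9 -> entry T r c < 9.
Hypothesis T_row0 : forall c, c < 9 -> entry T 0 c = c.
Hypothesis T'_cols : forall c, c < 9 -> distinct9 (entry T' ^~ c).

Lemma find_row_entry c r : c < 9 -> r < 9 -> find_row c (entry T' r c) = r.
Proof.
move=> c9 r9; have has_r : has (fun r' => entry T' r' c == entry T' r c) I9.
  by apply/hasP; exists r; rewrite ?mem_iota.
have lt9 : find_row c (entry T' r c) < 9 by rewrite -(size_iota 0 9) -has_find.
have := nth_find 0 has_r; rewrite nth_iota // add0n => /eqP.
exact: distinct9_inj (T'_cols c9) lt9 r9.
Qed.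

Variables sg rn cf : nat -> nat.
Hypothesis rn_lt : forall r, r < 9 -> rn r < 9.
Hypothesis cf0_lt : cf 0 < 9.
Hypothesis sg_rel : forall r c, r < 9 -> c < 9 -> sg (entry T r c) = entry T' (rn r) (cf c).

Lemma relabel_of_rel v : v < 9 -> sg v = entry T' (rn 0) (cf v).
Proof. by move=> v9; rewrite -{1}(T_row0 v9) sg_rel. Qed.

Lemma rows_of_rel r : r < 9 -> induced_rows cf (rn 0) r = rn r.
Proof.
move=> r9; rewrite /induced_rows -relabel_of_rel ?T_lt //.
by rewrite sg_rel // find_row_entry ?rn_lt.
Qed.

Lemma compatible_of_rel : compatible cf (rn 0).
Proof.
apply/allP => r /[!mem_iota] /andP[_ r9]; apply/allP => c /[!mem_iota] /andP[_ c9].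
by rewrite rows_of_rel // -relabel_of_rel ?T_lt // sg_rel.
Qed.

End InducedMaps.

Definition seq_of_perm (s : {perm 'I_3}) : seq nat := [seq val (s (inord i)) | i <- I3].

Lemma nth_seq_of_perm s i : i < 3 -> nth 0 (seq_of_perm s) i = val (s (inord i)).
Proof. by move=> i3; rewrite (nth_map 0) ?size_iota // nth_iota. Qed.

Lemma seq_of_perm_in s : seq_of_perm s \in permutations I3.
Proof.
rewrite mem_permutations /seq_of_perm /I3 -val_enum_ord -map_comp.
rewrite (eq_map (g := val \o s)) => [|i /=]; last by rewrite inord_val.
rewrite map_comp perm_map //; apply: uniq_perm; rewrite ?enum_uniq //.
  by rewrite map_inj_uniq ?enum_uniq //; exact: perm_inj.
by move=> i; rewrite mem_enum -(permKV s i) map_f ?mem_enum.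
Qed.

(* The line permutation with band permutation [s] and permutations [f0], [f1], [f2]
   inside the three bands, acting on the indices 0..8. *)
Definition lineperm_of_seqs (s f0 f1 f2 : seq nat) (k : nat) : nat :=
  3 * nth 0 s (k %/ 3) + nth 0 (nth [::] [:: f0; f1; f2] (k %/ 3)) (k %% 3).

Definition all_lineperms (P : (nat -> nat) -> bool) : bool :=
  let S3 := permutations I3 in
  all (fun s => all (fun f0 => all (fun f1 => all (fun f2 =>
    P (lineperm_of_seqs s f0 f1 f2)) S3) S3) S3) S3.

Definition lineperm_nat (l : lineperm) (k : nat) : nat := enc (lineperm_fun l (dec k)).

Lemma lineperm_natE l k : k < 9 ->
  lineperm_nat l k = lineperm_of_seqs (seq_of_perm l.1)
    (seq_of_perm (l.2 ord0)) (seq_of_perm (l.2 ord_mid)) (seq_of_perm (l.2 ord_max)) k.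
Proof.
move=> k9; have b3 : k %/ 3 < 3 by lia.
rewrite /lineperm_nat /lineperm_of_seqs /enc /lineperm_fun /= nth_seq_of_perm //.
congr (_ + _); move: b3; case: (k %/ 3) => [|[|[|]]] // _;
  by rewrite /= nth_seq_of_perm ?ltn_mod //; congr (val (l.2 _ _)); apply: val_inj; rewrite /= inordK.
Qed.

Lemma all_lineperms_exists P l : all_lineperms P ->
  exists2 cf, P cf & forall k, k < 9 -> lineperm_nat l k = cf k.
Proof.
move=> allPl; eexists; last exact: lineperm_natE.
by move: allPl => /allP/(_ _ (seq_of_perm_in _)) /allP/(_ _ (seq_of_perm_in _))
  /allP/(_ _ (seq_of_perm_in _)) /allP/(_ _ (seq_of_perm_in _)).
Qed.

Definition witness_grid : grid :=
  [:: [:: 0; 1; 2; 3; 4; 5; 6; 7; 8]; [:: 3; 8; 4; 2; 6; 7; 5; 0; 1];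
      [:: 6; 5; 7; 8; 1; 0; 4; 3; 2]; [:: 8; 7; 0; 6; 5; 3; 1; 2; 4];
      [:: 5; 6; 1; 4; 0; 2; 7; 8; 3]; [:: 4; 2; 3; 7; 8; 1; 0; 6; 5];
      [:: 2; 4; 6; 1; 7; 8; 3; 5; 0]; [:: 1; 0; 8; 5; 3; 6; 2; 4; 7];
      [:: 7; 3; 5; 0; 2; 4; 8; 1; 6]].

Definition witness : board := board_of_grid witness_grid.

Lemma sudoku_witness_grid : sudoku_grid witness_grid.
Proof. by vm_compute. Qed.

Lemma witness_row0 c : c < 9 -> entry witness_grid 0 c = c.
Proof. by move=> c9; apply/eqP; move: c c9; apply: allI9; vm_compute. Qed.

(* For every column line permutation [cf] and every choice [r0] of the image of
   row 0, the relation [sg (W r c) = W' (rn r) (cf c)] is inconsistent when [W']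
   is the transposed witness and forces [cf = rn = id] when [W' = W]. *)
Definition witness_rigid : bool :=
  all_lineperms (fun cf => all (fun r0 =>
    ~~ compatible witness_grid (transpose_grid witness_grid) cf r0
    && (compatible witness_grid witness_grid cf r0 ==>
        all (fun k => (cf k == k) && (induced_rows witness_grid witness_grid cf r0 k == k)) I9))
  I9).

Lemma witness_is_rigid : witness_rigid.
Proof. by vm_compute. Qed.

Lemma transpose_grid_cols T c : sudoku_grid T -> c < 9 -> distinct9 (entry (transpose_grid T) ^~ c).
Proof.
case/and4P=> _ rowsT _ _ c9; rewrite /distinct9 (_ : map _ _ = map (entry T c) I9).
  exact: allI9 rowsT c c9.
by apply/eq_in_map => r /[!mem_iota] /andP[_ r9]; rewrite entry_transpose.
Qed.

Lemma act9_fixed_nform q s B :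
  act9 (nform_perm q, s) B = B -> forall x, s (B x) = B (nform_fun q x).
Proof. by move=> /ffunP fixB x; have := fixB (nform_perm q x); rewrite ffunE /= permK permE. Qed.

Lemma witness_rel q s : act9 (nform_perm q, s) witness = witness ->
  forall r c, r < 9 -> c < 9 ->
  val (s (inord (entry witness_grid r c)))
  = entry (if q.1.1 then transpose_grid witness_grid else witness_grid)
      (lineperm_nat q.1.2 r) (lineperm_nat q.2 c).
Proof.
move=> /act9_fixed_nform fixW r c r9 c9; have := congr1 val (fixW (dec r, dec c)).
rewrite /witness board_of_gridE ?sudoku_witness_grid // ffunE /= !decK // => ->.
by rewrite /nform_fun; case: q.1.1; rewrite //= entry_transpose ?enc_lt.
Qed.

Lemma lineperm_nat_id l : (forall k, k < 9 -> lineperm_nat l k = k) -> lineperm_fun l =1 id.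
Proof. by move=> lid y; apply: enc_inj; rewrite -[in RHS](lid _ (enc_lt y)) /lineperm_nat encK. Qed.

Lemma nform_perm_id R C :
  lineperm_fun R =1 id -> lineperm_fun C =1 id -> nform_perm (false, R, C) = 1%g.
Proof. by move=> Rid Cid; apply/permP => -[y z]; rewrite permE perm1 /nform_fun /= Rid Cid. Qed.

Lemma witness_stab g : g \in G9 -> act9 g witness = witness -> g = (1%g, 1%g).
Proof.
case: g => h s; rewrite inE /= H9_nform => /andP[/imsetP[[[t R] C] _ ->] _] fixW.
have [cf rigid_cf Ccf] := all_lineperms_exists C witness_is_rigid.
pose sg v := val (s (inord v)); pose rn := lineperm_nat R.
have /andP[not_transposed untransposed] := allI9 rigid_cf (enc_lt (lineperm_fun R (dec 0))).
pose W' := if t then transpose_grid witness_grid else witness_grid.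
have rel r c : r < 9 -> c < 9 -> sg (entry witness_grid r c) = entry W' (rn r) (cf c).
  by move=> r9 c9; rewrite /sg (witness_rel fixW) // -Ccf.
have W'_cols c : c < 9 -> distinct9 (entry W' ^~ c).
  move=> c9; rewrite /W'; case: (t); first exact: transpose_grid_cols sudoku_witness_grid c9.
  by case/and4P: sudoku_witness_grid => _ _ colsW _; exact: allI9 colsW c c9.
have cf0_lt : cf 0 < 9 by rewrite -Ccf // enc_lt.
have rn_lt r : r < 9 -> rn r < 9 by move=> _; exact: enc_lt.
have W_lt := sudoku_grid_lt sudoku_witness_grid.
have compat := compatible_of_rel W_lt witness_row0 W'_cols rn_lt cf0_lt rel.
case: t @W' {fixW} rel W'_cols compat => W' rel W'_cols compat; first by case/negP: not_transposed.
have idmaps := allI9 (implyP untransposed compat).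
have cf_id k : k < 9 -> cf k = k by move=> k9; case/andP: (idmaps k k9) => /eqP.
have rn_id r : r < 9 -> rn r = r.
  move=> r9; rewrite -(rows_of_rel W_lt witness_row0 W'_cols rn_lt cf0_lt rel) //.
  by case/andP: (idmaps r r9) => _ /eqP.
rewrite nform_perm_id; last 2 first.
- exact: lineperm_nat_id.
- by apply: lineperm_nat_id => k k9; rewrite Ccf ?cf_id.
congr pair; apply/permP => v; apply: val_inj; rewrite perm1.
have := relabel_of_rel witness_row0 rel (ltn_ord v); rewrite /sg inord_val => ->.
by rewrite rn_id // cf_id // witness_row0.
Qed.

Lemma act9_1 B : act9 1%g B = B.
Proof. by apply/ffunP => x; rewrite ffunE /= invg1 !perm1. Qed.

(* With the composition convention of [perm], [act9] is a right action. *)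
Lemma act9M B g h : act9 (g * h)%g B = act9 h (act9 g B).
Proof. by apply/ffunP => x; rewrite !ffunE /= invMg !permM. Qed.

Definition act9_action := @TotalAction _ _ (fun B g => act9 g B) act9_1 act9M.

Lemma group_set_G9 : group_set G9.
Proof. exact: group_setX. Qed.

Canonical G9_group := Group group_set_G9.

Lemma card_orbit9_stab B : #|orbit9 B| * #|'C_G9[B | act9_action]%g| = G9_order.
Proof. by rewrite -card_G9 -(card_orbit_stab act9_action G9_group B). Qed.

Theorem mainTheorem10 :
  (exists B : board, is_sudoku B /\
     (forall g, g \in G9 -> act9 g B = B -> g = (1%g, 1%g)))
  /\ #|G9| = G9_order
  /\ (exists B : board, is_sudoku B /\ #|orbit9 B| = G9_order)
  /\ (forall B : board, is_sudoku B -> #|orbit9 B| <= G9_order).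
Proof.
have sudokuW := sudoku_board_of_grid sudoku_witness_grid.
have stabW : 'C_G9[witness | act9_action]%g = 1%g.
  apply/trivgP/subsetP => g /setIP[G9g]; move/astab1P => fixW.
  by rewrite (witness_stab G9g fixW) group1.
split; first by exists witness; split; [exact: sudokuW | exact: witness_stab].
split; first exact: card_G9.
split; first by exists witness; split => //; rewrite -(card_orbit9_stab witness) stabW cards1 muln1.
by move=> B _; rewrite -(card_orbit9_stab B) leq_pmulr ?cardG_gt0.
Qed.
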